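(* Let $\mathbb A$ be a graph of groups, let $\mathcal B$ be an $\mathbb A$-graph with associated graph of groups $\mathbb B$, let $u_0\in VB$, $v_0=[u_0]$ and $G=\pi_1(\mathbb A,v_0)$. Then: (1) if $p,p'$ are $\sim$-equivalent $\mathbb B$-paths, then $\mu(p)\sim\mu(p')$ as $\mathbb A$-paths; (2) the map $\mu$ restricted to $\mathbb B$-paths from $u_0$ to $u_0$ induces a homomorphism $\nu:\pi_1(\mathbb B,u_0)\to G$; (3) $\overline{L(\mathcal B,u_0)}=\nu(\pi_1(\mathbb B,u_0))$, in particular $\overline{L(\mathcal B,u_0)}$ is a subgroup of $G$; (4) there is a $\nu$-equivariant simplicial map $\phi:\widetilde{(\mathbb B,u_0)}\to\widetilde{(\mathbb A,v_0)}$ sending base-vertex to base-vertex, given on vertices by $\phi(\bar pB_u)=\overline{\mu(p)}A_{[u]}$.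
   Context: Graphs are in Serre's sense (edges come in pairs $e,e^{-1}$, $o(e)=t(e^{-1})$). A graph of groups $\mathbb A$ has vertex groups $A_v$, edge groups $A_e=A_{e^{-1}}$, monomorphisms $\alpha_e:A_e\to A_{o(e)}$, $\omega_e:A_e\to A_{t(e)}$, $\alpha_{e^{-1}}=\omega_e$. An $\mathbb A$-path from $v$ to $v'$ is a sequence $a_0,e_1,a_1,\dots,e_k,a_k$ ($k\ge0$) with $e_1,\dots,e_k$ an edge path from $v$ to $v'$, $a_0\in A_v$, $a_k\in A_{v'}$, $a_i\in A_{t(e_i)}$. The relation $\sim$ is the equivalence relation on $\mathbb A$-paths generated (modulo concatenation) by $a,e,\omega_e(c),e^{-1},\bar a\sim a\alpha_e(c)\bar a$ ($c\in A_e$, $a,\bar a\in A_{o(e)}$); $\bar p$ denotes the class, and $\pi_1(\mathbb A,v_0)$ is the group of classes of $\mathbb A$-paths from $v_0$ to $v_0$ under concatenation. The Bass–Serre tree $\widetilde{(\mathbb A,v_0)}$ has vertices the classes $\bar pA_v$ of $\mathbb A$-paths $p$ from $v_0$ to $v$ under $p\approx p'\iff p\sim p'a$ for some $a\in A_v$; $\bar pA_v$ and $\overline{pae}A_{t(e)}$ are adjacent for $a\in A_v$, $o(e)=v$; base-vertex $\bar1A_{v_0}$; $\pi_1$ acts by $\bar q\cdot\bar pA_v=\overline{qp}A_v$. An $\mathbb A$-graph $\mathcal B$ is a graph $B$ with a graph morphism $[\cdot]:B\to A$, a subgroup $B_u\le A_{[u]}$ for each $u\in VB$, and elements $f_\alpha\in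 A_{[o(f)]}$, $f_\omega\in A_{[t(f)]}$ for each $f\in EB$ with $(f^{-1})_\alpha=(f_\omega)^{-1}$. Its associated graph of groups $\mathbb B$ has underlying graph $B$, vertex groups $B_u$, edge groups $B_f=\alpha_{[f]}^{-1}(f_\alpha^{-1}B_{o(f)}f_\alpha)\cap\omega_{[f]}^{-1}(f_\omega B_{t(f)}f_\omega^{-1})\le A_{[f]}$ and $\alpha_f(g)=f_\alpha\alpha_{[f]}(g)f_\alpha^{-1}$. For a $\mathbb B$-path $p=b_0,f_1,b_1,\dots,f_s,b_s$ put $\mu(p)=(b_0(f_1)_\alpha),[f_1],((f_1)_\omega b_1(f_2)_\alpha),\dots,[f_s],((f_s)_\omega b_s)$, an $\mathbb A$-path. An $\mathbb B$-path is reduced if no subsequence $f,\omega_f(c),f^{-1}$ (with $c\in B_f$) occurs. $L(\mathcal B,u_0)$ is the set of $\mu(p)$ for reduced $\mathbb B$-paths $p$ from $u_0$ to $u_0$, and $\overline{L(\mathcal B,u_0)}$ the set of their $\sim$-classes in $\pi_1(\mathbb A,[u_0])$. *)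

From Stdlib Require Import Relations Bool.



Record group := Group {
  gcar :> Type;
  gmul : gcar -> gcar -> gcar;
  gone : gcar;
  ginv : gcar -> gcar;
  gmulA : forall x y z, gmul x (gmul y z) = gmul (gmul x y) z;
  gmul1g : forall x, gmul gone x = x;
  gmulVg : forall x, gmul (ginv x) x = gone }.
Arguments gmul {g} _ _.
Arguments gone {g}.
Arguments ginv {g} _.

(* Graphs in Serre's sense.  Oriented edges are pairs (geometric edge,  *)
(* orientation); e^{-1} flips the orientation, so e^{-1} <> e and       *)
(* (e^{-1})^{-1} = e; o is arbitrary and t(e) := o(e^{-1}).  Every Serre *)
(* graph is isomorphic to one of this form (choose an orientation).     *)
Record graph := Graph { gV : Type; gEg : Type; gends : gEg * bool -> gV }.
Definition gE (G : graph) : Type := (gEg G * bool)%type.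
Definition einv {G : graph} (e : gE G) : gE G := (fst e, negb (snd e)).
Definition eo {G : graph} (e : gE G) : gV G := gends G e.
Definition et {G : graph} (e : gE G) : gV G := gends G (einv e).

Lemma einv_inv (G : graph) (e : gE G) : einv (einv e) = e.
Proof. destruct e as [g b]; destruct b; reflexivity. Qed.

Definition tinv {G : graph} (e : gE G) : et (einv e) = eo e :=
  f_equal (gends G) (einv_inv G e).

(* Graphs of groups.  Edge groups are indexed by geometric edges, so    *)
(* A_e = A_{e^{-1}} holds definitionally; alpha_e : A_e -> A_{o(e)} is  *)
(* a monomorphism and omega_e := alpha_{e^{-1}} : A_e -> A_{t(e)}.      *)
Record gog := GoG {
  ggr : graph;
  Vgrp : gV ggr -> group;
  Egrp : gEg ggr -> group;
  alpha : forall e : gE ggr, Egrp (fst e) -> Vgrp (eo e);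
  alpha_mul : forall e x y, alpha e (gmul x y) = gmul (alpha e x) (alpha e y);
  alpha_inj : forall e x y, alpha e x = alpha e y -> x = y }.

Definition omega (A : gog) (e : gE (ggr A)) : Egrp A (fst e) -> Vgrp A (et e) :=
  alpha A (einv e).

(* Paths  a_0, e_1, a_1, ..., e_k, a_k  in a graph with a family F of   *)
(* vertex groups.  [pcons e a q] is  a, e, (q)  with a in F(o e).       *)
Inductive gpath (G : graph) (F : gV G -> group) : gV G -> gV G -> Type :=
| pnil : forall v : gV G, F v -> gpath G F v v
| pcons : forall (e : gE G) (w : gV G), F (eo e) -> gpath G F (et e) w -> gpath G F (eo e) w.
Arguments gpath {G} F _ _.
Arguments pnil {G F} v _.
Arguments pcons {G F} e {w} _ _.

Section PathOps.
Context {G : graph} {F : gV G -> group}.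

Definition castV {x y : gV G} (H : x = y) (a : F x) : F y :=
  eq_rect x (fun z => gcar (F z)) a y H.

Definition pcast {u u' w w' : gV G} (H1 : u = u') (H2 : w = w')
  (p : gpath F u w) : gpath F u' w' :=
  eq_rect w (fun z => gpath F u' z) (eq_rect u (fun z => gpath F z w) p u' H1) w' H2.

Definition lmul {v w} (p : gpath F v w) : F v -> gpath F v w :=
  match p in gpath _ v w return F v -> gpath F v w with
  | pnil v a => fun x => pnil v (gmul x a)
  | pcons e a q => fun x => pcons e (gmul x a) q
  end.

Fixpoint pcat {u v w} (p : gpath F u v) : gpath F v w -> gpath F u w :=
  match p in gpath _ u v return gpath F v w -> gpath F u w with
  | pnil _ a => fun q => lmul q a
  | pcons e a p' => fun q => pcons e a (pcat p' q)
  end.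

(* inverse path: a_k^{-1}, e_k^{-1}, ..., e_1^{-1}, a_0^{-1} *)
Fixpoint prev {v w} (p : gpath F v w) : gpath F w v :=
  match p in gpath _ v w return gpath F w v with
  | pnil v a => pnil v (ginv a)
  | pcons e a q =>
      pcat (prev q)
        (pcast (eq_refl : eo (einv e) = et e) (tinv e)
           (pcons (einv e) gone (pnil _ (castV (eq_sym (tinv e)) (ginv a)))))
  end.

Fixpoint allin (S : forall v, F v -> Prop) {v w} (p : gpath F v w) : Prop :=
  match p with
  | pnil v a => S v a
  | pcons e a q => S (eo e) a /\ allin S q
  end.

(* The equivalence relation ~ , for edge groups EG, edge maps al
   (omega_e := al (e^{-1})), admissible edge-group elements cP, and an
   admissibility predicate Ok on paths (the relation is the equivalence
   relation on Ok-paths generated by the elementary moves). *)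
Section Step.
Context {EG : gEg G -> Type} (al : forall e : gE G, EG (fst e) -> F (eo e))
  (cP : forall e : gE G, EG (fst e) -> Prop).

Definition redexL (e : gE G) (a : F (eo e)) (c : EG (fst e)) (ab : F (et (einv e)))
  : gpath F (eo e) (et (einv e)) :=
  pcons e a (pcons (einv e) (al (einv e) c) (pnil _ ab)).

Definition redexR (e : gE G) (a : F (eo e)) (c : EG (fst e)) (ab : F (et (einv e)))
  : gpath F (eo e) (et (einv e)) :=
  pcast eq_refl (eq_sym (tinv e))
    (pnil (eo e) (gmul (gmul a (al e c)) (castV (tinv e) ab))).

Inductive gstep : forall u w, gpath F u w -> gpath F u w -> Prop :=
| gstep_intro : forall u w (e : gE G) (p : gpath F u (eo e))
    (q : gpath F (et (einv e)) w) a c ab, cP e c ->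
    gstep u w (pcat p (pcat (redexL e a c ab) q)) (pcat p (pcat (redexR e a c ab) q)).

Definition gsim (Ok : forall u w, gpath F u w -> Prop) (u w : gV G)
  : relation (gpath F u w) :=
  clos_refl_sym_trans _ (fun x y => Ok u w x /\ Ok u w y /\ gstep u w x y).

(* no subsequence  e, omega_e(c), e^{-1}  with cP e c *)
Definition backtrack (e : gE G) {w} (q : gpath F (et e) w) : Prop :=
  match q with
  | pnil _ _ => False
  | pcons e' a _ => exists c, cP e c /\
      existT (fun e0 : gE G => gcar (F (eo e0))) e' a
      = existT (fun e0 : gE G => gcar (F (eo e0))) (einv e) (al (einv e) c)
  end.

Fixpoint reduced {v w} (p : gpath F v w) : Prop :=
  match p with
  | pnil _ _ => True
  | pcons e a q => ~ backtrack e q /\ reduced q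
  end.
End Step.

(* Bass-Serre tree: vertices are paths from v0 (up to ~ and right
   multiplication by S_v), adjacency as in the context. *)
Section Tree.
Context (v0 : gV G) (S : forall v, F v -> Prop)
  (Ok : forall u w, gpath F u w -> Prop) (sim : forall u w, relation (gpath F u w)).

Definition tvert : Type := {v : gV G & gpath F v0 v}.

Definition tapprox (X Y : tvert) : Prop :=
  exists (v : gV G) (x y : gpath F v0 v) (a : F v),
    S v a /\ Ok _ _ x /\ Ok _ _ y /\
    X = existT _ v x /\ Y = existT _ v y /\ sim v0 v x (pcat y (pnil v a)).

Definition tadj0 (X Y : tvert) : Prop :=
  exists (e : gE G) (x : gpath F v0 (eo e)) (a : F (eo e)),
    S (eo e) a /\
    tapprox X (existT _ (eo e) x) /\
    tapprox Y (existT _ (et e) (pcat x (pcons e a (pnil (et e) gone)))).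

Definition tadj (X Y : tvert) : Prop := tadj0 X Y \/ tadj0 Y X.

Definition tbase : tvert := existT _ v0 (pnil v0 gone).

Definition tact (g : gpath F v0 v0) (X : tvert) : tvert :=
  existT _ (projT1 X) (pcat g (projT2 X)).
End Tree.
End PathOps.

Definition apath (A : gog) := gpath (G := ggr A) (Vgrp A).

Definition simA (A : gog) :=
  gsim (EG := fun g => gcar (Egrp A g)) (alpha A) (fun _ _ => True) (fun _ _ _ => True).

Definition tapproxA (A : gog) (v0 : gV (ggr A)) :=
  tapprox v0 (fun _ _ => True) (fun _ _ _ => True) (simA A).

Definition tadjA (A : gog) (v0 : gV (ggr A)) :=
  tadj v0 (fun _ _ => True) (fun _ _ _ => True) (simA A).

(* A-graphs.  The graph morphism [.] is (lv, le) with                  *)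
(* le f = (lg (fst f), lflip (fst f) xor snd f), which commutes with    *)
(* inversion; lo is compatibility with o (hence with t).               *)
Record agraph (A : gog) := AGraph {
  bgr : graph;
  lv : gV bgr -> gV (ggr A);
  lg : gEg bgr -> gEg (ggr A);
  lflip : gEg bgr -> bool;
  lo : forall f : gE bgr,
      lv (eo f) = eo ((lg (fst f), xorb (lflip (fst f)) (snd f)) : gE (ggr A));
  Bsub : forall u, Vgrp A (lv u) -> Prop;
  Bsub1 : forall u, Bsub u gone;
  BsubM : forall u x y, Bsub u x -> Bsub u y -> Bsub u (gmul x y);
  BsubV : forall u x, Bsub u x -> Bsub u (ginv x);
  fal : forall f : gE bgr, Vgrp A (lv (eo f)) }.
Arguments bgr {A} _.
Arguments lv {A} _ _.
Arguments lg {A} _ _.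
Arguments lflip {A} _ _.
Arguments lo {A} _ _.
Arguments Bsub {A} _ _ _.
Arguments fal {A} _ _.

Section AGraph.
Context {A : gog} (B : agraph A).

Definition le (f : gE (bgr B)) : gE (ggr A) :=
  (lg B (fst f), xorb (lflip B (fst f)) (snd f)).

Definition fom (f : gE (bgr B)) : Vgrp A (lv B (et f)) := ginv (fal B (einv f)).

Lemma lt (f : gE (bgr B)) : lv B (et f) = et (le f).
Proof.
  destruct f as [g b].
  pose proof (lo B (g, negb b)) as H.
  unfold et, eo, einv, le in *; simpl in *. rewrite H.
  f_equal. f_equal.
  destruct (lflip B g), b; reflexivity.
Qed.

Definition FB (u : gV (bgr B)) : group := Vgrp A (lv B u).

Definition bpath := gpath (G := bgr B) FB.

Definition alphaB (f : gE (bgr B)) (c : Egrp A (lg B (fst f))) : FB (eo f) :=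
  gmul (gmul (fal B f) (@castV _ (Vgrp A) _ _ (eq_sym (lo B f)) (alpha A (le f) c)))
       (ginv (fal B f)).

(* B_f = alpha_[f]^{-1}(f_a^{-1} B_o(f) f_a) cap omega_[f]^{-1}(f_w B_t(f) f_w^{-1})
   i.e. alpha_f(c) in B_o(f) and omega_f(c) = alpha_{f^{-1}}(c) in B_t(f) *)
Definition Bedge (f : gE (bgr B)) (c : Egrp A (lg B (fst f))) : Prop :=
  Bsub B (eo f) (alphaB f c) /\ Bsub B (et f) (alphaB (einv f) c).

Definition isB {u w} (p : bpath u w) : Prop := allin (Bsub B) p.

Definition simB := gsim (EG := fun g => gcar (Egrp A (lg B g))) alphaB Bedge (fun u w (p : bpath u w) => isB p).

Definition reducedB {u w} (p : bpath u w) : Prop := reduced (EG := fun g => gcar (Egrp A (lg B g))) alphaB Bedge p.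

(* mu(b_0, f_1, ..., f_s, b_s) =
   (b_0 f1_a), [f_1], (f1_w b_1 f2_a), ..., [f_s], (fs_w b_s) *)
Fixpoint mu_aux {u w} (p : bpath u w) : FB u -> apath A (lv B u) (lv B w) :=
  match p in gpath _ u w return FB u -> apath A (lv B u) (lv B w) with
  | pnil u b => fun pre => pnil (lv B u) (gmul pre b)
  | pcons f b q => fun pre =>
      pcast (eq_sym (lo B f)) eq_refl
        (pcons (le f) (@castV _ (Vgrp A) _ _ (lo B f) (gmul (gmul pre b) (fal B f)))
           (pcast (lt f) eq_refl (mu_aux q (fom f))))
  end.

Definition mu {u w} (p : bpath u w) : apath A (lv B u) (lv B w) := mu_aux p gone.

(* \overline{L(B,u0)} as a predicate on closed A-paths at [u0]
   (a union of ~-classes) *)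
Definition Lbar (u0 : gV (bgr B)) (x : apath A (lv B u0) (lv B u0)) : Prop :=
  exists p : bpath u0 u0, isB p /\ reducedB p /\ simA A _ _ (mu p) x.

Definition tapproxB (u0 : gV (bgr B)) :=
  tapprox u0 (Bsub B) (fun u w (p : bpath u w) => isB p) simB.

Definition tadjB (u0 : gV (bgr B)) :=
  tadj u0 (Bsub B) (fun u w (p : bpath u w) => isB p) simB.

Definition phi {u0 : gV (bgr B)} (X : tvert (F := FB) u0) : tvert (F := Vgrp A) (lv B u0) :=
  existT _ (lv B (projT1 X)) (mu (projT2 X)).
End AGraph.

From Stdlib Require Import Relations Bool ProofIrrelevance Classical_Prop.

(* The map mu only reads off labels and inserts the elements f_alpha, f_omega
   between consecutive letters, so it is multiplicative on the nose.  An
   elementary move of B, a, f, omega_f(c), f^-1, abar ~ a alpha_f(c) abar,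
   is sent to an elementary move of A: since alpha_f(c) is alpha_[f](c)
   conjugated by f_alpha, the elements f_omega = (f^-1)_alpha^-1 inserted by mu
   cancel these conjugators.  Hence mu induces a homomorphism nu.  Every B-path
   is equivalent to a reduced one (cancel the backtracks from the end), so the
   classes of L(B,u0) are exactly the image of nu, a subgroup.  Finally
   mu(p . (a, f, 1)) = mu(p) . (a f_alpha, [f], f_omega), and the trailing
   f_omega is absorbed into the vertex group, so phi maps edges to edges. *)

Arguments pcast : simpl never.
Arguments castV : simpl never.

Section GroupFacts.
Context {g : group}.

Lemma gmulgV (x : g) : gmul x (ginv x) = gone.
Proof.
  transitivity (gmul (gmul (ginv (ginv x)) (ginv x)) (gmul x (ginv x))).
  - rewrite gmulVg, gmul1g. reflexivity.
  - rewrite <- gmulA, (gmulA _ (ginv x) x (ginv x)), gmulVg, gmul1g. apply gmulVg.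
Qed.

Lemma gmulg1 (x : g) : gmul x gone = x.
Proof. rewrite <- (gmulVg _ x), gmulA, gmulgV, gmul1g. reflexivity. Qed.

Lemma gmulKV (x y : g) : gmul (ginv x) (gmul x y) = y.
Proof. rewrite gmulA, gmulVg, gmul1g. reflexivity. Qed.

Lemma gmulI (x y z : g) : gmul x y = gmul x z -> y = z.
Proof. intros H. rewrite <- (gmulKV x y), H, gmulKV. reflexivity. Qed.
End GroupFacts.

Lemma gmorph1 {g h : group} (f : g -> h) :
  (forall x y, f (gmul x y) = gmul (f x) (f y)) -> f gone = gone.
Proof. intros Hf. apply (gmulI (f gone)). rewrite <- Hf, !gmulg1. reflexivity. Qed.

Section PathAlgebra.
Context {G : graph} {F : gV G -> group}.

Lemma castV_irr {x y : gV G} (H H' : x = y) (a : F x) : castV H a = castV H' a.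
Proof. rewrite (proof_irrelevance _ H H'). reflexivity. Qed.

Lemma castV_id {x : gV G} (H : x = x) (a : F x) : castV H a = a.
Proof. rewrite (proof_irrelevance _ H eq_refl). reflexivity. Qed.

Lemma castV_trans {x y z : gV G} (H1 : x = y) (H2 : y = z) (a : F x) :
  castV H2 (castV H1 a) = castV (eq_trans H1 H2) a.
Proof. destruct H2, H1. reflexivity. Qed.

Lemma castV_mul {x y : gV G} (H : x = y) (a b : F x) :
  castV H (gmul a b) = gmul (castV H a) (castV H b).
Proof. destruct H. reflexivity. Qed.

Lemma castV_one {x y : gV G} (H : x = y) : castV H gone = (gone : F y).
Proof. destruct H. reflexivity. Qed.

Lemma castV_pred (S : forall v, F v -> Prop) {x y : gV G} (H : x = y) (a : F x) :
  S x a -> S y (castV H a).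
Proof. destruct H. trivial. Qed.

Lemma pcast_irr {u u' w w'} (H1 H1' : u = u') (H2 H2' : w = w') (p : gpath F u w) :
  pcast H1 H2 p = pcast H1' H2' p.
Proof. rewrite (proof_irrelevance _ H1 H1'), (proof_irrelevance _ H2 H2'). reflexivity. Qed.

Lemma pcast_id {u w} (H1 : u = u) (H2 : w = w) (p : gpath F u w) : pcast H1 H2 p = p.
Proof. rewrite (pcast_irr H1 eq_refl H2 eq_refl). reflexivity. Qed.

Lemma pcast_trans {u u' u'' w w' w''} (H1 : u = u') (H2 : w = w')
  (H1' : u' = u'') (H2' : w' = w'') (p : gpath F u w) :
  pcast H1' H2' (pcast H1 H2 p) = pcast (eq_trans H1 H1') (eq_trans H2 H2') p.
Proof. destruct H1', H2', H1, H2. reflexivity. Qed.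

Lemma lmul_pcast {u u' w w'} (H1 : u = u') (H2 : w = w') (p : gpath F u w) x :
  lmul (pcast H1 H2 p) x = pcast H1 H2 (lmul p (castV (eq_sym H1) x)).
Proof. destruct H1, H2. reflexivity. Qed.

Lemma pcat_pcast_l {u u' v w} (H : u = u') (p : gpath F u v) (q : gpath F v w) :
  pcat (pcast H eq_refl p) q = pcast H eq_refl (pcat p q).
Proof. destruct H. reflexivity. Qed.

Lemma pcat_pcast_mid {u v v' w} (H : v = v') (p : gpath F u v) (q : gpath F v' w) :
  pcat (pcast eq_refl H p) q = pcat p (pcast (eq_sym H) eq_refl q).
Proof. destruct H. reflexivity. Qed.

Lemma pcons_pcast (e : gE G) {w w'} (H : w = w') a (q : gpath F (et e) w) :
  pcons e a (pcast eq_refl H q) = pcast eq_refl H (pcons e a q).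
Proof. destruct H. reflexivity. Qed.

Lemma pnil_pcast {x y z} (H1 : x = y) (H2 : x = z) (a : F x) :
  pcast H1 H2 (pnil x a) = pcast eq_refl (eq_trans (eq_sym H1) H2) (pnil y (castV H1 a)).
Proof. destruct H1, H2. reflexivity. Qed.

Lemma pcat_pcast_inner {u x x' y y' w}
  (H1 : x = x') (H2 : y = y') (P : gpath F u x') (R : gpath F x y) (Q : gpath F y' w) :
  pcat P (pcat (pcast H1 H2 R) Q) =
  pcat (pcast eq_refl (eq_sym H1) P) (pcat R (pcast (eq_sym H2) eq_refl Q)).
Proof. destruct H1, H2. reflexivity. Qed.

Lemma lmul_lmul {u w} (p : gpath F u w) x y : lmul (lmul p x) y = lmul p (gmul y x).
Proof. destruct p; simpl; rewrite gmulA; reflexivity. Qed.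

Lemma lmul1 {u w} (p : gpath F u w) : lmul p gone = p.
Proof. destruct p; simpl; rewrite gmul1g; reflexivity. Qed.

Lemma pcat_lmul {u v w} (p : gpath F u v) (q : gpath F v w) x :
  pcat (lmul p x) q = lmul (pcat p q) x.
Proof. destruct p; simpl; [rewrite lmul_lmul|]; reflexivity. Qed.

Lemma pcatA {u v w z} (p : gpath F u v) (q : gpath F v w) (r : gpath F w z) :
  pcat (pcat p q) r = pcat p (pcat q r).
Proof. induction p; simpl; [apply pcat_lmul | rewrite IHp; reflexivity]. Qed.

Lemma pcatp1 {u w} (p : gpath F u w) : pcat p (pnil w gone) = p.
Proof. induction p; simpl; [rewrite gmulg1 | rewrite IHp]; reflexivity. Qed.

Lemma pcat1p {u w} (p : gpath F u w) : pcat (pnil u gone) p = p.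
Proof. apply lmul1. Qed.

Lemma allin_true {u w} (p : gpath F u w) : allin (fun _ _ => True) p.
Proof. induction p; simpl; auto. Qed.

Section Allin.
Variable S : forall v, F v -> Prop.
Hypothesis S1 : forall v, S v gone.
Hypothesis SM : forall v x y, S v x -> S v y -> S v (gmul x y).
Hypothesis SV : forall v x, S v x -> S v (ginv x).

Lemma allin_lmul {u w} (p : gpath F u w) x : S u x -> allin S p -> allin S (lmul p x).
Proof. destruct p; simpl; intuition. Qed.

Lemma allin_pcat {u v w} (p : gpath F u v) (q : gpath F v w) :
  allin S p -> allin S q -> allin S (pcat p q).
Proof. induction p; simpl; intuition. apply allin_lmul; auto. Qed.

Lemma allin_pcast {u u' w w'} (H1 : u = u') (H2 : w = w') (p : gpath F u w) :
  allin S p -> allin S (pcast H1 H2 p).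
Proof. destruct H1, H2. trivial. Qed.

Lemma allin_prev {u w} (p : gpath F u w) : allin S p -> allin S (prev p).
Proof.
  induction p as [v a|e w a q IH]; simpl; intros Hp.
  - auto.
  - destruct Hp as [Ha Hq]. apply allin_pcat; auto.
    apply allin_pcast. simpl. split; auto. apply castV_pred; auto.
Qed.
End Allin.
End PathAlgebra.

Section Equivalence.
Context {G : graph} {F : gV G -> group} {EG : gEg G -> Type}
  (al : forall e : gE G, EG (fst e) -> F (eo e)) (cP : forall e : gE G, EG (fst e) -> Prop)
  (S : forall v, F v -> Prop).
Hypothesis S1 : forall v, S v gone.
Hypothesis SM : forall v x y, S v x -> S v y -> S v (gmul x y).

Lemma gsim_mono (Ok Ok' : forall u w, gpath F u w -> Prop) :
  (forall u w p, Ok u w p -> Ok' u w p) ->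
  forall u w x y, gsim al cP Ok u w x y -> gsim al cP Ok' u w x y.
Proof.
  intros HOk u w x y H. induction H as [x y [Hx [Hy Hs]]| | |].
  - apply rst_step. auto.
  - apply rst_refl.
  - apply rst_sym; auto.
  - eapply rst_trans; eauto.
Qed.

Definition gsim_in : forall u w, relation (gpath F u w) :=
  gsim al cP (fun u w (p : gpath F u w) => allin S p).

Lemma gstep_redex (e : gE G) a c {w} (q : gpath F (et (einv e)) w) : cP e c ->
  gstep al cP _ _ (pcons e a (pcons (einv e) (al (einv e) c) q))
    (lmul (pcast (tinv e) eq_refl q) (gmul a (al e c))).
Proof.
  intros Hc.
  assert (Step := gstep_intro al cP _ _ e (pnil _ gone) q a c gone Hc).
  unfold redexL, redexR in Step. simpl in Step.
  rewrite pcat_pcast_mid in Step. simpl in Step.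
  rewrite gmul1g, !lmul1, castV_one, gmulg1, (pcast_irr _ (tinv e) _ eq_refl) in Step.
  exact Step.
Qed.

Lemma gsim_in_cong_l {u v w} (z : gpath F u v) (x y : gpath F v w) :
  allin S z -> gsim_in v w x y -> gsim_in u w (pcat z x) (pcat z y).
Proof.
  intros Hz H. induction H as [x y [Hx [Hy Hs]]| | |].
  - apply rst_step. split; [|split]; try (apply allin_pcat; auto).
    destruct Hs. rewrite <- !(pcatA z p). constructor; auto.
  - apply rst_refl.
  - apply rst_sym; auto.
  - eapply rst_trans; eauto.
Qed.

Lemma gsim_in_cong_r {u v w} (z : gpath F v w) (x y : gpath F u v) :
  allin S z -> gsim_in u v x y -> gsim_in u w (pcat x z) (pcat y z).
Proof.
  intros Hz H. induction H as [x y [Hx [Hy Hs]]| | |].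
  - apply rst_step. split; [|split]; try (apply allin_pcat; auto).
    destruct Hs. rewrite !pcatA. constructor; auto.
  - apply rst_refl.
  - apply rst_sym; auto.
  - eapply rst_trans; eauto.
Qed.

Lemma gsim_in_redex (e : gE G) a c {w} (q : gpath F (et (einv e)) w) :
  cP e c -> S _ a -> S _ (al e c) -> S _ (al (einv e) c) -> allin S q ->
  gsim_in _ _ (pcons e a (pcons (einv e) (al (einv e) c) q))
    (lmul (pcast (tinv e) eq_refl q) (gmul a (al e c))).
Proof.
  intros Hc Ha Hal Hal' Hq. apply rst_step. split; [|split].
  - simpl. auto.
  - apply allin_lmul; auto. apply allin_pcast; auto.
  - apply gstep_redex; auto.
Qed.

Section Inverses.
Hypothesis SV : forall v x, S v x -> S v (ginv x).
Variable c1 : forall g, EG g.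
Hypothesis cP1 : forall e, cP e (c1 (fst e)).
Hypothesis al1 : forall e, al e (c1 (fst e)) = gone.

Lemma gsim_in_cancel (e : gE G) {w} (q : gpath F (et (einv e)) w) : allin S q ->
  gsim_in _ _ (pcons e gone (pcons (einv e) gone q)) (pcast (tinv e) eq_refl q).
Proof.
  intros Hq.
  assert (H := gsim_in_redex e gone (c1 (fst e)) q (cP1 e) (S1 _)).
  rewrite (al1 e), (al1 (einv e) : al (einv e) (c1 (fst e)) = gone), gmul1g, lmul1 in H.
  exact (H (S1 _) (S1 _) Hq).
Qed.

Lemma gsim_in_linv_edge (e : gE G) {w} a (q : gpath F (et e) w) : S _ a -> allin S q ->
  gsim_in _ _ (pcat (pcast eq_refl (tinv e)
                       (pcons (einv e) gone (pnil _ (castV (eq_sym (tinv e)) (ginv a)))))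
                    (pcons e a q)) q.
Proof.
  intros Ha Hq.
  (* [einv (einv e)] reduces to [e] only once the orientation bit is a constructor. *)
  destruct e as [g b]; destruct b;
    rewrite pcat_pcast_mid, pcast_id; simpl; rewrite castV_id, gmulVg;
    assert (H := gsim_in_cancel (einv (g, _)) q Hq); rewrite pcast_id in H; exact H.
Qed.

Lemma gsim_in_linv {u w} (p : gpath F u w) : allin S p ->
  gsim_in _ _ (pcat (prev p) p) (pnil _ gone).
Proof.
  induction p as [v a|e w a q IH]; simpl; intros Hp.
  - rewrite gmulVg. apply rst_refl.
  - destruct Hp as [Ha Hq]. rewrite pcatA.
    eapply rst_trans; [|exact (IH Hq)].
    apply gsim_in_cong_l; [apply allin_prev; auto | apply gsim_in_linv_edge; auto].
Qed.

Lemma gsim_in_rinv {u w} (p : gpath F u w) : allin S p ->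
  gsim_in _ _ (pcat p (prev p)) (pnil _ gone).
Proof.
  intros Hp.
  assert (Hp' : allin S (prev p)) by (apply allin_prev; auto).
  assert (Hp'' : allin S (prev (prev p))) by (apply allin_prev; auto).
  rewrite <- (pcat1p (pcat p (prev p))).
  eapply rst_trans.
  { apply gsim_in_cong_r; [apply allin_pcat; auto|]. apply rst_sym, (gsim_in_linv (prev p)); auto. }
  rewrite pcatA, <- (pcatA (prev p) p).
  eapply rst_trans.
  { apply gsim_in_cong_l; auto. apply gsim_in_cong_r; auto. apply gsim_in_linv; auto. }
  rewrite pcat1p. apply gsim_in_linv; auto.
Qed.
End Inverses.

Lemma pcons_of_head (P : forall e : gE G, F (eo e) -> Prop) {v w} (q : gpath F v w) :
  match q with pnil _ _ => False | pcons e a _ => P e a end ->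
  exists e a (q' : gpath F (et e) w) (H : eo e = v), P e a /\ q = pcast H eq_refl (pcons e a q').
Proof. destruct q; [tauto|]. intros Hp. exists e, g, q, eq_refl. auto. Qed.

Lemma backtrack_inv (e : gE G) {w} (q : gpath F (et e) w) : backtrack al cP e q ->
  exists c (q' : gpath F (et (einv e)) w), cP e c /\ q = pcons (einv e) (al (einv e) c) q'.
Proof.
  intros Hbt.
  destruct (pcons_of_head _ q Hbt) as (e' & a & q' & H & [c [Hc Heq]] & ->).
  assert (E := f_equal (@projT1 _ _) Heq); simpl in E; subst e'.
  apply inj_pair2 in Heq; subst a.
  exists c, q'. rewrite pcast_id. auto.
Qed.

Lemma reduced_lmul {u w} (p : gpath F u w) x : reduced al cP p -> reduced al cP (lmul p x).
Proof. destruct p; simpl; auto. Qed.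

Lemma reduced_pcast {u u' w w'} (H1 : u = u') (H2 : w = w') (p : gpath F u w) :
  reduced al cP p -> reduced al cP (pcast H1 H2 p).
Proof. destruct H1, H2. trivial. Qed.

Hypothesis S_al : forall e c, cP e c -> S (eo e) (al e c).

Lemma gsim_in_reduced {u w} (p : gpath F u w) : allin S p ->
  exists p', allin S p' /\ reduced al cP p' /\ gsim_in u w p p'.
Proof.
  induction p as [v a|e w a q IH]; intros Hp.
  - exists (pnil v a). repeat split; auto. apply rst_refl.
  - destruct Hp as [Ha Hq]. destruct (IH Hq) as [q' [Hq' [Rq' Sq']]].
    assert (Hcons : gsim_in _ _ (pcons e a q) (pcons e a q')).
    { rewrite <- (lmul1 q), <- (lmul1 q').
      apply (gsim_in_cong_l (pcons e a (pnil _ gone))); simpl; auto. }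
    destruct (classic (backtrack al cP e q')) as [Hbt|Hnbt].
    2: { exists (pcons e a q'). simpl. auto. }
    destruct (backtrack_inv e q' Hbt) as [c [q'' [Hc ->]]].
    destruct Hq' as [Hal' Hq'']. destruct Rq' as [_ Rq''].
    exists (lmul (pcast (tinv e) eq_refl q'') (gmul a (al e c))). split; [|split].
    + apply allin_lmul; auto. apply allin_pcast; auto.
    + apply reduced_lmul, reduced_pcast; auto.
    + eapply rst_trans; [exact Hcons|]. apply gsim_in_redex; auto.
Qed.
End Equivalence.

Section GraphOfGroups.
Context {A : gog}.

Lemma simA_gsim_in u w (x y : apath A u w) :
  simA A u w x y <->
  gsim_in (EG := fun g => gcar (Egrp A g)) (alpha A) (fun _ _ => True) (fun _ _ => True) u w x y.
Proof. split; apply gsim_mono; auto using allin_true. Qed.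

Lemma simA_cong_l {u v w} (z : apath A u v) (x y : apath A v w) :
  simA A _ _ x y -> simA A _ _ (pcat z x) (pcat z y).
Proof. rewrite !simA_gsim_in. apply gsim_in_cong_l; auto using allin_true. Qed.

Lemma simA_cong_r {u v w} (z : apath A v w) (x y : apath A u v) :
  simA A _ _ x y -> simA A _ _ (pcat x z) (pcat y z).
Proof. rewrite !simA_gsim_in. apply gsim_in_cong_r; auto using allin_true. Qed.

Lemma alpha1 (e : gE (ggr A)) : alpha A e gone = gone.
Proof. apply gmorph1. intros; apply alpha_mul. Qed.

Lemma simA_rinv {u w} (x : apath A u w) : simA A _ _ (pcat x (prev x)) (pnil _ gone).
Proof.
  apply simA_gsim_in.
  apply gsim_in_rinv with (c1 := fun _ => gone); auto using allin_true, alpha1.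
Qed.

Lemma tapproxA_sim_r (v0 : gV (ggr A)) P v (q r : apath A v0 v) b :
  tapproxA A v0 P (existT _ v q) -> simA A _ _ q (pcat r (pnil v b)) ->
  tapproxA A v0 P (existT _ v r).
Proof.
  intros (v' & x & y & a & _ & _ & _ & -> & Ey & Hs) Hq.
  assert (E := f_equal (@projT1 _ _) Ey); simpl in E; subst v'.
  apply inj_pair2 in Ey; subst y.
  exists v, x, r, (gmul b a). repeat split.
  eapply rst_trans; [exact Hs|].
  eapply rst_trans; [apply simA_cong_r; exact Hq|]. rewrite pcatA. apply rst_refl.
Qed.

Lemma tapproxA_pcast (v0 : gV (ggr A)) P x y (H : x = y) (p : apath A v0 x) :
  tapproxA A v0 P (existT _ x p) <->
  tapproxA A v0 P (existT _ y (pcast eq_refl H p)).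
Proof. destruct H. reflexivity. Qed.

Lemma pcons_flip (g : gEg (ggr A)) (x y : bool) (Exy : x = y) {w}
  (a : Vgrp A (eo (g, x))) (q : apath A (et (g, x)) w) :
  pcons (g, x) a q =
  pcast (f_equal (fun z => eo ((g, z) : gE (ggr A))) (eq_sym Exy)) eq_refl
    (pcons (g, y) (castV (f_equal (fun z => eo ((g, z) : gE (ggr A))) Exy) a)
       (pcast (f_equal (fun z => et ((g, z) : gE (ggr A))) Exy) eq_refl q)).
Proof. destruct Exy. reflexivity. Qed.

Lemma alpha_flip (g : gEg (ggr A)) (x y : bool) (Exy : x = y) H c :
  castV H (alpha A (g, x) c) = alpha A (g, y) c.
Proof. destruct Exy. apply castV_id. Qed.
End GraphOfGroups.

Section AGraph.
Context {A : gog} (B : agraph A).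

Local Notation EB := (fun g => gcar (Egrp A (lg B g))).
Local Notation EA := (fun g => gcar (Egrp A g)).

Lemma alphaB1 (f : gE (bgr B)) : alphaB B f gone = gone.
Proof. unfold alphaB. rewrite alpha1, castV_one, gmulg1, gmulgV. reflexivity. Qed.

Lemma Bedge1 (f : gE (bgr B)) : Bedge B f gone.
Proof.
  assert (E := alphaB1 (einv f)). cbn [fst einv] in E.
  split; [rewrite alphaB1 | rewrite E]; apply Bsub1.
Qed.

Lemma isB_pcat {u v w} (p : bpath B u v) (q : bpath B v w) : isB B p -> isB B q -> isB B (pcat p q).
Proof. apply allin_pcat, BsubM. Qed.

Lemma mu_aux_mul {u w} (p : bpath B u w) x y : mu_aux B p (gmul x y) = lmul (mu_aux B p y) x.
Proof.
  destruct p; simpl.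
  - rewrite !gmulA. reflexivity.
  - rewrite lmul_pcast. simpl.
    rewrite (castV_irr (eq_sym (eq_sym _)) (lo B e)), <- castV_mul, !gmulA. reflexivity.
Qed.

Lemma mu_aux_lmul {u w} (p : bpath B u w) b pre : mu_aux B (lmul p b) pre = mu_aux B p (gmul pre b).
Proof. destruct p; simpl; rewrite ?gmulA; reflexivity. Qed.

Lemma mu_aux_pcat {u v w} (p : bpath B u v) (r : bpath B v w) pre :
  mu_aux B (pcat p r) pre = pcat (mu_aux B p pre) (mu B r).
Proof.
  revert pre; induction p as [v b|f w0 b q IH]; intros pre; simpl.
  - rewrite mu_aux_lmul. unfold mu. rewrite <- (gmulg1 (gmul pre b)) at 1.
    apply mu_aux_mul.
  - rewrite pcat_pcast_l. simpl. rewrite pcat_pcast_l, IH. reflexivity.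
Qed.

Lemma mu_pcat {u v w} (p : bpath B u v) (q : bpath B v w) :
  mu B (pcat p q) = pcat (mu B p) (mu B q).
Proof. apply mu_aux_pcat. Qed.

Lemma mu_pnil u (b : FB B u) : mu B (pnil u b) = pnil (lv B u) b.
Proof. unfold mu. simpl. rewrite gmul1g. reflexivity. Qed.

Lemma mu_edge (f : gE (bgr B)) (a : FB B (eo f)) :
  mu B (pcons f a (pnil (et f) (@gone (Vgrp A (lv B (et f)))))) =
  pcast (eq_sym (lo B f)) eq_refl
    (pcons (le B f) (castV (lo B f) (gmul a (fal B f)))
       (pcast (lt B f) eq_refl (pnil _ (fom B f)))).
Proof. unfold mu. simpl. rewrite gmul1g, gmulg1. reflexivity. Qed.

Lemma mu_aux_pcast {u u' w w'} (H1 : u = u') (H2 : w = w') (p : bpath B u w) pre :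
  mu_aux B (pcast H1 H2 p) pre =
  pcast (f_equal (lv B) H1) (f_equal (lv B) H2) (mu_aux B p (castV (F := FB B) (eq_sym H1) pre)).
Proof. destruct H1, H2. reflexivity. Qed.

Lemma mu_redex (f : gE (bgr B)) a (c : Egrp A (lg B (fst f))) ab :
  exists (H1 : eo (le B f) = lv B (eo f)) (H2 : et (einv (le B f)) = lv B (et (einv f))) a' ab',
    mu B (redexL (EG := EB) (alphaB B) f a c ab)
    = pcast H1 H2 (redexL (EG := EA) (alpha A) (le B f) a' c ab') /\
    mu B (redexR (EG := EB) (alphaB B) f a c ab)
    = pcast H1 H2 (redexR (EG := EA) (alpha A) (le B f) a' c ab').
Proof.
  destruct f as [g b].
  (* [le B (einv f)] is [einv (le B f)] only up to this identity of orientation bits. *)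
  pose proof (eq_sym (negb_xorb_r (lflip B g) b)) as Eflip.
  do 4 eexists. split.
  - unfold mu, redexL. simpl.
    rewrite pcast_trans.
    change (le B (einv (g,b))) with ((lg B g, xorb (lflip B g) (negb b)) : gE (ggr A)).
    rewrite (pcons_flip (lg B g) _ _ Eflip).
    rewrite pcast_trans, pcast_id, (pcast_trans (lt B (einv (g, b)))), pnil_pcast,
      !pcons_pcast, (pcons_pcast (le B (g, b))), pcast_trans.
    match goal with |- pcast _ _ (pcons _ _ (pcons _ ?x _)) = _ =>
      replace x with (alpha A (einv (le B (g, b))) c) end.
    + reflexivity.
    + unfold fom, alphaB. rewrite <- !gmulA, gmulKV, gmulVg, gmulg1, !castV_trans.
      symmetry. apply (alpha_flip (lg B g) _ _ Eflip).
  - destruct b; unfold mu, redexR; rewrite mu_aux_pcast; simpl;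
      rewrite !pcast_trans, pnil_pcast; symmetry; rewrite pnil_pcast; symmetry.
    all: f_equal; [apply proof_irrelevance | f_equal].
    all: unfold alphaB, fom; rewrite ?castV_mul, ?castV_trans, ?castV_one, ?castV_id.
    all: rewrite !gmul1g, <- !gmulA; repeat f_equal; apply proof_irrelevance.
Qed.

Lemma mu_gstep {u w} (x y : bpath B u w) :
  gstep (EG := EB) (alphaB B) (Bedge B) u w x y ->
  simA A _ _ (mu B x) (mu B y).
Proof.
  intros [u' w' f p q a c ab _].
  rewrite !mu_pcat.
  destruct (mu_redex f a c ab) as (H1 & H2 & a' & ab' & ->& ->).
  rewrite !pcat_pcast_inner.
  apply rst_step. split; [exact I | split; [exact I|]].
  constructor. exact I.
Qed.

Lemma mu_simB {u w} (p p' : bpath B u w) :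
  simB B u w p p' -> simA A (lv B u) (lv B w) (mu B p) (mu B p').
Proof.
  intros H. induction H as [x y [_ [_ Hs]]| | |].
  - apply mu_gstep; auto.
  - apply rst_refl.
  - apply rst_sym; auto.
  - eapply rst_trans; eauto.
Qed.

Lemma simB_linv {u w} (p : bpath B u w) : isB B p -> simB B _ _ (pcat (prev p) p) (pnil _ gone).
Proof.
  apply gsim_in_linv with (c1 := fun _ => gone); auto using Bsub1, BsubM, BsubV, Bedge1.
  exact alphaB1.
Qed.

Lemma Lbar_iff (u0 : gV (bgr B)) (x : apath A (lv B u0) (lv B u0)) :
  Lbar B u0 x <-> exists p : bpath B u0 u0, isB B p /\ simA A _ _ (mu B p) x.
Proof.
  split.
  - intros [p [Hp [_ Hs]]]. eauto.
  - intros [p [Hp Hs]].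
    destruct (gsim_in_reduced (EG := EB) (alphaB B) (Bedge B) (Bsub B) (Bsub1 _ B)
                (BsubM _ B) (fun f c Hc => proj1 Hc) p Hp) as [p' [Hp' [Rp' Sp']]].
    exists p'. repeat split; auto.
    eapply rst_trans; [|exact Hs]. apply rst_sym, mu_simB. exact Sp'.
Qed.

Section Subgroup.
Variable u0 : gV (bgr B).

Lemma Lbar_one : Lbar B u0 (pnil (lv B u0) gone).
Proof.
  apply Lbar_iff. exists (pnil u0 gone). split; [apply Bsub1|].
  rewrite mu_pnil. apply rst_refl.
Qed.

Lemma Lbar_pcat x y : Lbar B u0 x -> Lbar B u0 y -> Lbar B u0 (pcat x y).
Proof.
  rewrite !Lbar_iff. intros [p [Hp Hpx]] [q [Hq Hqy]].
  exists (pcat p q). split; [apply isB_pcat; auto|].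
  rewrite mu_pcat.
  eapply rst_trans; [apply simA_cong_r; exact Hpx|]. apply simA_cong_l; exact Hqy.
Qed.

Lemma Lbar_prev x : Lbar B u0 x -> Lbar B u0 (prev x).
Proof.
  rewrite !Lbar_iff. intros [p [Hp Hpx]].
  exists (prev p). split; [apply allin_prev; auto using Bsub1, BsubM, BsubV|].
  assert (Hinv : simA A _ _ (pcat (mu B (prev p)) (mu B p)) (pnil _ gone)).
  { rewrite <- mu_pcat. eapply rst_trans; [apply mu_simB, simB_linv; auto|].
    rewrite mu_pnil. apply rst_refl. }
  rewrite <- (pcatp1 (mu B (prev p))).
  eapply rst_trans; [apply simA_cong_l, rst_sym, (simA_rinv x)|].
  rewrite <- pcatA.
  eapply rst_trans; [apply simA_cong_r, simA_cong_l, rst_sym; exact Hpx|].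
  eapply rst_trans; [apply simA_cong_r; exact Hinv|].
  rewrite pcat1p. apply rst_refl.
Qed.
End Subgroup.
End AGraph.

Section TreeMap.
Context {A : gog} (B : agraph A) (u0 : gV (bgr B)).

Lemma phi_tapprox X Y : tapproxB B u0 X Y -> tapproxA A (lv B u0) (phi B X) (phi B Y).
Proof.
  intros (v & x & y & a & Ha & Hx & Hy & -> & -> & Hs).
  exists (lv B v), (mu B x), (mu B y), a. repeat split.
  (* [tapprox] elaborates the vertex groups of B unfolded; refold them so [mu_pcat] applies. *)
  fold (FB B) in *. eapply rst_trans; [apply mu_simB, Hs|].
  rewrite mu_pcat, mu_pnil. apply rst_refl.
Qed.

Lemma phi_tbase : tapproxA A (lv B u0) (phi B (tbase u0)) (tbase (lv B u0)).
Proof.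
  exists (lv B u0), (mu B (pnil u0 gone)), (pnil _ gone), gone.
  repeat split. rewrite mu_pnil, pcatp1. apply rst_refl.
Qed.

Lemma phi_tact (g : bpath B u0 u0) (X : tvert (F := FB B) u0) :
  tapproxA A (lv B u0) (phi B (tact u0 g X)) (tact (lv B u0) (mu B g) (phi B X)).
Proof.
  destruct X as [v x].
  exists (lv B v), (mu B (pcat g x)), (pcat (mu B g) (mu B x)), gone.
  repeat split. rewrite pcatp1, mu_pcat. apply rst_refl.
Qed.

Lemma phi_tadj0 X Y :
  tadj0 u0 (Bsub B) (fun u w (p : bpath B u w) => isB B p) (simB B) X Y ->
  tadj0 (lv B u0) (fun _ _ => True) (fun _ _ _ => True) (simA A) (phi B X) (phi B Y).
Proof.
  intros (e & x & a & Ha & H1 & H2). fold (FB B) in *.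
  exists (le B e), (pcast eq_refl (lo B e) (mu B x)), (castV (lo B e) (gmul a (fal B e))).
  split; [exact I|split].
  - apply tapproxA_pcast, (phi_tapprox _ _ H1).
  - apply (tapproxA_pcast _ _ _ _ (eq_sym (lt B e))).
    apply (tapproxA_sim_r _ _ _ _ _ (fom B e) (phi_tapprox _ _ H2)).
    cbn [projT2]. rewrite mu_pcat, mu_edge, pcat_pcast_mid, pcatA, pcat_pcast_mid.
    simpl. rewrite lmul1, (pcast_irr (eq_sym (eq_sym (lt B e))) (lt B e) eq_refl eq_refl).
    apply rst_refl.
Qed.

Lemma phi_tadj X Y : tadjB B u0 X Y -> tadjA A (lv B u0) (phi B X) (phi B Y).
Proof. intros [H|H]; [left|right]; apply phi_tadj0; exact H. Qed.
End TreeMap.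

Theorem mainTheorem4 (A : gog) (B : agraph A) (u0 : gV (bgr B)) :
  (* (1) mu respects ~ on B-paths *)
  (forall (u w : gV (bgr B)) (p p' : bpath B u w),
      isB B p -> isB B p' -> simB B u w p p' ->
      simA A (lv B u) (lv B w) (mu B p) (mu B p'))
  (* (2) nu : pi_1(B,u0) -> pi_1(A,[u0]), [p] |-> [mu p], is a homomorphism
         (well defined by (1)) *)
  /\ (forall p q : bpath B u0 u0, isB B p -> isB B q ->
        simA A (lv B u0) (lv B u0) (mu B (pcat p q)) (pcat (mu B p) (mu B q)))
  (* (3) \overline{L(B,u0)} = nu(pi_1(B,u0)) ... *)
  /\ (forall x : apath A (lv B u0) (lv B u0),
        Lbar B u0 x <-> exists p : bpath B u0 u0, isB B p /\ simA A _ _ (mu B p) x)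
  (* ... in particular it is a subgroup of pi_1(A,[u0]) *)
  /\ (Lbar B u0 (pnil (lv B u0) gone)
      /\ (forall x y, Lbar B u0 x -> Lbar B u0 y -> Lbar B u0 (pcat x y))
      /\ (forall x, Lbar B u0 x -> Lbar B u0 (prev x)))
  (* (4) phi(p B_u) = mu(p) A_[u] is a well-defined, simplicial,
         base-point preserving, nu-equivariant map of Bass-Serre trees *)
  /\ ((forall X Y, tapproxB B u0 X Y -> tapproxA A (lv B u0) (phi B X) (phi B Y))
      /\ (forall X Y, isB B (projT2 X) -> isB B (projT2 Y) ->
            tadjB B u0 X Y -> tadjA A (lv B u0) (phi B X) (phi B Y))
      /\ tapproxA A (lv B u0) (phi B (tbase u0)) (tbase (lv B u0))
      /\ (forall (g : bpath B u0 u0) (X : tvert (F := FB B) u0),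
            isB B g -> isB B (projT2 X) ->
            tapproxA A (lv B u0) (phi B (tact u0 g X)) (tact (lv B u0) (mu B g) (phi B X)))).
Proof.
  split; [intros u w p p' _ _; apply mu_simB|].
  split; [intros p q _ _; rewrite mu_pcat; apply rst_refl|].
  split; [apply Lbar_iff|].
  split; [split; [apply Lbar_one | split; [apply Lbar_pcat | apply Lbar_prev]]|].
  split; [apply phi_tapprox|].
  split; [intros X Y _ _; apply phi_tadj|].
  split; [apply phi_tbase|].
  intros g X _ _. apply phi_tact.
Qed.
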